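(* Let $m \in \mathbb N$ and let $\phi \colon \mathcal H_2^0 \to M_m$ be a map. Then the following are equivalent: (i) $\phi$ is real linear and $\phi(\mathcal{IH}_2^0) \subset \mathcal U_m$; (ii) there exist $U, V \in \mathcal U_m$ and $n \in \mathbb N$ such that $m = 2n$ and $\phi(A) = U(A \otimes I_n)V$ for all $A \in \mathcal H_2^0$.
   Context: $M_m$ is the set of $m\times m$ complex matrices, $\mathcal U_m$ the unitary ones, $\mathcal H_2^0$ the real vector space of trace-zero $2\times 2$ complex hermitian matrices, $\mathcal{IH}_2^0 = \mathcal H_2^0 \cap \mathcal U_2$, $I_n$ the identity matrix and $\otimes$ the Kronecker product. *)

From HB Require Import structures.
From mathcomp Require Import all_boot all_order all_algebra.
From mathcomp Require Import complex mxtens.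
From mathcomp Require Import reals Rstruct.
Set Implicit Arguments. Unset Strict Implicit. Unset Printing Implicit Defensive.
Import Order.TTheory GRing.Theory Num.Theory.
Local Open Scope ring_scope.

Definition C : numClosedFieldType := (Rdefinitions.R)[i].

Definition adjmx (m n : nat) (A : 'M[C]_(m, n)) : 'M[C]_(n, m) :=
  (map_mx Num.conj A)^T.

Definition unitary (m : nat) (U : 'M[C]_m) : Prop := adjmx U *m U = 1%:M.

Definition herm0 (A : 'M[C]_2) : Prop := adjmx A = A /\ \tr A = 0.

Definition iherm0 (A : 'M[C]_2) : Prop := herm0 A /\ unitary A.

Definition real_linear_on_herm0 (m : nat) (phi : 'M[C]_2 -> 'M[C]_m) : Prop :=
  forall (a b : C) (A B : 'M[C]_2),
    a \is Num.real -> b \is Num.real -> herm0 A -> herm0 B ->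
    phi (a *: A + b *: B) = a *: phi A + b *: phi B.

From HB Require Import structures.
From mathcomp Require Import all_boot all_order all_algebra.
From mathcomp Require Import complex mxtens spectral ring.
Set Implicit Arguments. Unset Strict Implicit. Unset Printing Implicit Defensive.
Import Order.TTheory GRing.Theory Num.Theory.
Local Open Scope ring_scope.

(* Write P_k := phi sigma_k for the Pauli matrices sigma_1, sigma_2, sigma_3, a real basis
   of H_2^0.  For anticommuting hermitian involutions X and Y, (3/5) X + (4/5) Y is again a
   hermitian involution, so unitarity of phi on IH_2^0 forces P_j^* P_k + P_k^* P_j = 0.
   Hence Q_2 := P_1^* P_2 and Q_3 := P_1^* P_3 are anticommuting skew-hermitian square
   roots of -1.  If the rows of B form an orthonormal basis of {v | v Q_2 = i v}, then the
   rows of B and of -B Q_3 form an orthonormal basis of C^m; so m = 2n, and the unitary W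
   with these rows conjugates (Q_2, Q_3) to (sigma_1 sigma_2 (x) I_n, sigma_1 sigma_3 (x) I_n).
   Thus A |-> P_1 W^* (sigma_1 (x) I_n) (A (x) I_n) W agrees with phi on the Pauli basis,
   hence on all of H_2^0. *)

Lemma sum_ord2 (V : nmodType) (F : 'I_2 -> V) : \sum_(i < 2) F i = F 0 + F 1.
Proof. by rewrite big_ord_recl big_ord1; congr (_ + F _); apply: val_inj. Qed.

Lemma mx2P (T : Type) (A B : 'M[T]_2) :
  A 0 0 = B 0 0 -> A 0 1 = B 0 1 -> A 1 0 = B 1 0 -> A 1 1 = B 1 1 -> A = B.
Proof.
have ord2 (k : 'I_2) : k = 0 \/ k = 1.
  by case: k => [[|[|//]]] ?; [left | right]; apply: val_inj.
move=> e00 e01 e10 e11; apply/matrixP=> i j.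
by case: (ord2 i) => ->; case: (ord2 j) => ->.
Qed.

Section Pauli.
Context {K : numClosedFieldType}.

Definition sigma1 : 'M[K]_2 := \matrix_(i, j) (if i == j then 0 else 1).
Definition sigma2 : 'M[K]_2 :=
  \matrix_(i, j) (if i == j then 0 else if i == 0 then - 'i else 'i).
Definition sigma3 : 'M[K]_2 :=
  \matrix_(i, j) (if i == j then (if i == 0 then 1 else -1) else 0).

Local Ltac mx2_entries :=
  apply/matrixP; case=> [[|[|//]]] ?; case=> [[|[|//]]] ?;
  rewrite !mxE ?sum_ord2 ?mxE /= ?raddfN /= ?(conjC0, conjC1, conjCi);
  rewrite ?(opprK, mulr0, mul0r, mulr1, mul1r, mulrN, mulNr, addr0, add0r, addrN, addNr);
  rewrite -?expr2 ?sqrCi ?opprK.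

Lemma sigma1_sqr : sigma1 *m sigma1 = 1%:M. Proof. by mx2_entries. Qed.
Lemma sigma2_sqr : sigma2 *m sigma2 = 1%:M. Proof. by mx2_entries. Qed.
Lemma sigma3_sqr : sigma3 *m sigma3 = 1%:M. Proof. by mx2_entries. Qed.

Lemma sigma12_anticomm : sigma1 *m sigma2 + sigma2 *m sigma1 = 0.
Proof. by mx2_entries. Qed.
Lemma sigma13_anticomm : sigma1 *m sigma3 + sigma3 *m sigma1 = 0.
Proof. by mx2_entries. Qed.
Lemma sigma23_anticomm : sigma2 *m sigma3 + sigma3 *m sigma2 = 0.
Proof. by mx2_entries. Qed.

Lemma sigma1_herm : (map_mx Num.conj sigma1)^T = sigma1. Proof. by mx2_entries. Qed.
Lemma sigma2_herm : (map_mx Num.conj sigma2)^T = sigma2. Proof. by mx2_entries. Qed.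
Lemma sigma3_herm : (map_mx Num.conj sigma3)^T = sigma3. Proof. by mx2_entries. Qed.

Lemma mxtrace_sigma1 : \tr sigma1 = 0. Proof. by rewrite /mxtrace sum_ord2 !mxE addr0. Qed.
Lemma mxtrace_sigma2 : \tr sigma2 = 0. Proof. by rewrite /mxtrace sum_ord2 !mxE addr0. Qed.
Lemma mxtrace_sigma3 : \tr sigma3 = 0. Proof. by rewrite /mxtrace sum_ord2 !mxE subrr. Qed.

Lemma herm_traceless_pauli (A : 'M[K]_2) :
  (map_mx Num.conj A)^T = A -> \tr A = 0 ->
  exists x1 x2 x3 : K, [/\ x1 \is Num.real, x2 \is Num.real, x3 \is Num.real &
    A = x1 *: sigma1 + x2 *: sigma2 + x3 *: sigma3].
Proof.
move=> A_herm A_tr.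
have A_entry i j : A j i = (A i j)^* by rewrite -{1}A_herm !mxE.
have A11 : A 1 1 = - A 0 0.
  by apply/eqP; rewrite -addr_eq0 addrC -A_tr /mxtrace sum_ord2.
exists ('Re (A 0 1)), (- 'Im (A 0 1)), (A 0 0).
split; rewrite ?rpredN ?Creal_Re ?Creal_Im ?CrealE -?A_entry //.
apply: mx2P; rewrite !mxE /=.
- by rewrite !mulr0 !add0r mulr1.
- by rewrite mulr1 mulr0 addr0 mulrNN [_ * 'i]mulrC -Crect.
- rewrite A_entry {1}[A 0 1]Crect conjC_rect ?Creal_Re ?Creal_Im //.
  by rewrite mulr1 mulr0 addr0 mulNr [_ * 'i]mulrC.
- by rewrite A11 !mulr0 !add0r mulrN1.
Qed.

End Pauli.

Section TensorIdentity.
Variable R : pzRingType.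

Lemma tensmxDl m n p q (A B : 'M[R]_(m, n)) (M : 'M[R]_(p, q)) :
  (A + B) *t M = A *t M + B *t M.
Proof. by apply/matrixP=> i j; rewrite !mxE mulrDl. Qed.

Lemma tensmxZl m n p q (a : R) (A : 'M[R]_(m, n)) (M : 'M[R]_(p, q)) :
  (a *: A) *t M = a *: (A *t M).
Proof. by apply/matrixP=> i j; rewrite !mxE mulrA. Qed.

Lemma tensmx11 m n : (1%:M : 'M[R]_m) *t (1%:M : 'M[R]_n) = 1%:M.
Proof.
apply/matrixP=> i j.
case: (mxtens_indexP i) => i0 i1; case: (mxtens_indexP j) => j0 j1.
by rewrite tensmxE !mxE (can_eq (@mxtens_indexK _ _)) xpair_eqE -natrM mulnb.
Qed.

Lemma tensmx1_block n (e : (2 * n)%N = (n + n)%N) (A : 'M[R]_2) :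
  castmx (e, e) (A *t (1%:M : 'M[R]_n)) =
  block_mx (A 0 0)%:M (A 0 1)%:M (A 1 0)%:M (A 1 1)%:M.
Proof.
have castl (k : 'I_n) : cast_ord (esym e) (lshift n k) = mxtens_index (0, k).
  exact: val_inj.
have castr (k : 'I_n) : cast_ord (esym e) (rshift n k) = mxtens_index (1, k).
  by apply: val_inj; rewrite /= mul1n.
apply/matrixP=> i j; rewrite castmxE.
case: (split_ordP i) => {}i ->; case: (split_ordP j) => {}j ->;
by rewrite ?castl ?castr tensmxE ?(block_mxEul, block_mxEur, block_mxEdl, block_mxEdr)
  !mxE mulr_natr.
Qed.

End TensorIdentity.

Lemma sigma12_tens_block (K : numClosedFieldType) n (e : (2 * n)%N = (n + n)%N) :
  castmx (e, e) ((sigma1 *m sigma2) *t (1%:M : 'M[K]_n)) =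
  block_mx 'i%:M 0 0 (- 'i)%:M.
Proof.
rewrite tensmx1_block !mxE !sum_ord2 !mxE /=.
by rewrite !(mul0r, mulr0, mul1r, add0r, addr0) !raddf0.
Qed.

Lemma sigma13_tens_block (K : numClosedFieldType) n (e : (2 * n)%N = (n + n)%N) :
  castmx (e, e) ((sigma1 *m sigma3) *t (1%:M : 'M[K]_n)) =
  block_mx 0 (-1)%:M 1%:M 0.
Proof.
rewrite tensmx1_block !mxE !sum_ord2 !mxE /=.
by rewrite !(mul0r, mulr0, mul1r, add0r, addr0) !raddf0.
Qed.

Lemma mulmx_comb (R : comPzRingType) m (A B X Y : 'M[R]_m) (c s : R) :
  (c *: A + s *: B) *m (c *: X + s *: Y) =
  (c * c) *: (A *m X) + (s * s) *: (B *m Y) + (c * s) *: (A *m Y + B *m X).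
Proof.
rewrite mulmxDl !mulmxDr -!scalemxAl -!scalemxAr !scalerA scalerDr (mulrC s c).
by rewrite [(c * s) *: (B *m X) + _]addrC addrACA.
Qed.

Lemma circle_comb_eq (F : fieldType) (V : lmodType F) (c s : F) (u v : V) :
  c * c + s * s = 1 -> c * s != 0 ->
  ((c * c) *: u + (s * s) *: u + (c * s) *: v == u) = (v == 0).
Proof.
move=> cs1 cs_neq0; rewrite -scalerDl cs1 scale1r -subr_eq0 addrAC subrr add0r.
by rewrite scaler_eq0 (negbTE cs_neq0).
Qed.

Lemma involution_comb (R : comPzRingType) m (X Y : 'M[R]_m) (c s : R) :
  X *m X = 1%:M -> Y *m Y = 1%:M -> X *m Y + Y *m X = 0 -> c * c + s * s = 1 ->
  (c *: X + s *: Y) *m (c *: X + s *: Y) = 1%:M.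
Proof.
move=> XX YY XY cs1.
by rewrite mulmx_comb XX YY XY scaler0 addr0 -scalerDl cs1 scale1r.
Qed.

Lemma adjmxE m n (A : 'M[C]_(m, n)) i j : adjmx A i j = (A j i)^*.
Proof. by rewrite /adjmx !mxE. Qed.

Lemma adjmxK m n (A : 'M[C]_(m, n)) : adjmx (adjmx A) = A.
Proof. by apply/matrixP=> i j; rewrite !adjmxE conjCK. Qed.

Lemma adjmxD m n (A B : 'M[C]_(m, n)) : adjmx (A + B) = adjmx A + adjmx B.
Proof. by rewrite /adjmx map_mxD linearD. Qed.

Lemma adjmxN m n (A : 'M[C]_(m, n)) : adjmx (- A) = - adjmx A.
Proof. by rewrite /adjmx map_mxN linearN. Qed.

Lemma adjmxZ m n (a : C) (A : 'M[C]_(m, n)) : adjmx (a *: A) = a^* *: adjmx A.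
Proof. by apply/matrixP=> i j; rewrite !(adjmxE, mxE) rmorphM. Qed.

Lemma adjmxM m n p (A : 'M[C]_(m, n)) (B : 'M[C]_(n, p)) :
  adjmx (A *m B) = adjmx B *m adjmx A.
Proof. by rewrite /adjmx map_mxM trmx_mul. Qed.

Lemma adjmx1 n : adjmx (1%:M : 'M[C]_n) = 1%:M.
Proof. by rewrite /adjmx map_mx1 trmx1. Qed.

Lemma adjmx_col_mx m1 m2 n (A : 'M[C]_(m1, n)) (B : 'M[C]_(m2, n)) :
  adjmx (col_mx A B) = row_mx (adjmx A) (adjmx B).
Proof. by rewrite /adjmx map_col_mx tr_col_mx. Qed.

Lemma unitarymxE m n (A : 'M[C]_(m, n)) :
  (A \is unitarymx) = (A *m adjmx A == 1%:M).
Proof. by rewrite /adjmx map_trmx. Qed.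

Lemma mulmx_adj_unitary n (U : 'M[C]_n) : unitary U -> U *m adjmx U = 1%:M.
Proof. exact: mulmx1C. Qed.

Lemma unitaryM n (U V : 'M[C]_n) : unitary U -> unitary V -> unitary (U *m V).
Proof.
rewrite /unitary adjmxM => hU hV.
by rewrite mulmxA -(mulmxA (adjmx V)) hU mulmx1.
Qed.

Lemma unitary_adjmx n (U : 'M[C]_n) : unitary U -> unitary (adjmx U).
Proof. by rewrite /unitary adjmxK; apply: mulmx_adj_unitary. Qed.

Lemma herm0_comb (a b : C) (A B : 'M[C]_2) :
  a \is Num.real -> b \is Num.real -> herm0 A -> herm0 B -> herm0 (a *: A + b *: B).
Proof.
move=> ra rb [hA tA] [hB tB]; split.
  by rewrite adjmxD !adjmxZ hA hB !conj_Creal.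
by rewrite mxtraceD !mxtraceZ tA tB !mulr0 addr0.
Qed.

Lemma iherm0_involution (A : 'M[C]_2) : herm0 A -> A *m A = 1%:M -> iherm0 A.
Proof. by move=> hA AA; split; rewrite // /unitary hA.1. Qed.

Lemma herm0_sigma1 : herm0 sigma1. Proof. exact: conj sigma1_herm mxtrace_sigma1. Qed.
Lemma herm0_sigma2 : herm0 sigma2. Proof. exact: conj sigma2_herm mxtrace_sigma2. Qed.
Lemma herm0_sigma3 : herm0 sigma3. Proof. exact: conj sigma3_herm mxtrace_sigma3. Qed.

#[local] Hint Resolve herm0_sigma1 herm0_sigma2 herm0_sigma3 : core.

Lemma real_linear_pauli m (f : 'M[C]_2 -> 'M[C]_m) (x1 x2 x3 : C) :
  real_linear_on_herm0 f ->
  x1 \is Num.real -> x2 \is Num.real -> x3 \is Num.real ->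
  f (x1 *: sigma1 + x2 *: sigma2 + x3 *: sigma3) =
  x1 *: f sigma1 + x2 *: f sigma2 + x3 *: f sigma3.
Proof.
move=> f_lin r1 r2 r3.
have h12 := herm0_comb r1 r2 herm0_sigma1 herm0_sigma2.
by rewrite -[x1 *: _ + _]scale1r f_lin ?rpred1 // scale1r f_lin.
Qed.

Lemma real_linear_herm0_eq m (f g : 'M[C]_2 -> 'M[C]_m) :
  real_linear_on_herm0 f -> real_linear_on_herm0 g ->
  f sigma1 = g sigma1 -> f sigma2 = g sigma2 -> f sigma3 = g sigma3 ->
  forall A, herm0 A -> f A = g A.
Proof.
move=> f_lin g_lin e1 e2 e3 A [A_herm A_tr].
have [x1 [x2 [x3 [r1 r2 r3 ->]]]] := herm_traceless_pauli A_herm A_tr.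
by rewrite !real_linear_pauli // e1 e2 e3.
Qed.

Lemma adjmx_tensmx m n p q (A : 'M[C]_(m, n)) (M : 'M[C]_(p, q)) :
  adjmx (A *t M) = adjmx A *t adjmx M.
Proof. by apply/matrixP=> i j; rewrite !mxE rmorphM. Qed.

Lemma unitary_tensmx1 m n (A : 'M[C]_m) :
  unitary A -> unitary (A *t (1%:M : 'M[C]_n)).
Proof.
by rewrite /unitary adjmx_tensmx adjmx1 tensmx_mul mulmx1 => ->; rewrite tensmx11.
Qed.

Lemma real_linear_tensmx1 m n (e : (2 * n)%N = m) (U V : 'M[C]_m) :
  real_linear_on_herm0 (fun A => U *m castmx (e, e) (A *t (1%:M : 'M[C]_n)) *m V).
Proof.
case: m / e in U V *; move=> a b A B _ _ _ _.
by rewrite !castmx_id tensmxDl !tensmxZl mulmxDr mulmxDl -!scalemxAr -!scalemxAl.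
Qed.

Lemma unitary_comb_anticomm m (P Q : 'M[C]_m) (c s : C) :
  c \is Num.real -> s \is Num.real -> c * c + s * s = 1 -> c * s != 0 ->
  unitary P -> unitary Q -> unitary (c *: P + s *: Q) ->
  adjmx P *m Q + adjmx Q *m P = 0.
Proof.
rewrite /unitary => c_real s_real cs1 cs_neq0 PP QQ.
rewrite adjmxD !adjmxZ !conj_Creal // mulmx_comb PP QQ => /eqP.
by rewrite circle_comb_eq // => /eqP.
Qed.

Lemma real_linear_unitary_anticomm m (phi : 'M[C]_2 -> 'M[C]_m) (X Y : 'M[C]_2) :
  real_linear_on_herm0 phi -> (forall A, iherm0 A -> unitary (phi A)) ->
  herm0 X -> herm0 Y -> X *m X = 1%:M -> Y *m Y = 1%:M -> X *m Y + Y *m X = 0 ->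
  adjmx (phi X) *m phi Y + adjmx (phi Y) *m phi X = 0.
Proof.
move=> phi_lin phi_unitary hX hY XX YY XY.
(* Any real point of the unit circle off the axes would do. *)
pose c : C := 3 / 5; pose s : C := 4 / 5.
have c_real : c \is Num.real by rewrite rpredM ?rpredV ?realn.
have s_real : s \is Num.real by rewrite rpredM ?rpredV ?realn.
have cs1 : c * c + s * s = 1 by rewrite /c /s; field.
have cs_neq0 : c * s != 0 by rewrite !mulf_eq0 !invr_eq0 !pnatr_eq0.
apply: (unitary_comb_anticomm c_real s_real cs1 cs_neq0).
- by apply/phi_unitary/iherm0_involution.
- by apply/phi_unitary/iherm0_involution.
rewrite -phi_lin //; apply/phi_unitary/iherm0_involution; first exact: herm0_comb.
exact: involution_comb.
Qed.

Section AnticommutingUnitaries.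
Variables (m : nat) (P : 'M[C]_m).
Hypothesis P_unitary : unitary P.

Lemma adjmx_unitary_mulmx (X Y : 'M[C]_m) :
  adjmx (adjmx P *m X) *m (adjmx P *m Y) = adjmx X *m Y.
Proof. by rewrite adjmxM adjmxK -mulmxA (mulmxA P) mulmx_adj_unitary // mul1mx. Qed.

Lemma anticomm_skew (Q : 'M[C]_m) :
  adjmx P *m Q + adjmx Q *m P = 0 -> adjmx (adjmx P *m Q) = - (adjmx P *m Q).
Proof. by move/eqP; rewrite addrC addr_eq0 adjmxM adjmxK => /eqP. Qed.

Lemma anticomm_sqr (Q : 'M[C]_m) : unitary Q ->
  adjmx P *m Q + adjmx Q *m P = 0 -> (adjmx P *m Q) *m (adjmx P *m Q) = - 1%:M.
Proof.
move=> Q_unitary /anticomm_skew Q_skew.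
by rewrite -{1}[adjmx P *m Q]opprK -Q_skew mulNmx adjmx_unitary_mulmx Q_unitary.
Qed.

Lemma anticomm_anticomm (Q R : 'M[C]_m) :
  adjmx P *m Q + adjmx Q *m P = 0 -> adjmx P *m R + adjmx R *m P = 0 ->
  adjmx Q *m R + adjmx R *m Q = 0 ->
  (adjmx P *m Q) *m (adjmx P *m R) = - ((adjmx P *m R) *m (adjmx P *m Q)).
Proof.
move=> /anticomm_skew Q_skew /anticomm_skew R_skew QR_anticomm.
rewrite -{1}[adjmx P *m Q]opprK -{2}[adjmx P *m R]opprK -Q_skew -R_skew.
rewrite !mulNmx !adjmx_unitary_mulmx opprK.
by apply/eqP; rewrite eq_sym -addr_eq0 addrC QR_anticomm.
Qed.

End AnticommutingUnitaries.

Section SkewAnticommutingPair.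
Variables (m : nat) (Q2 Q3 : 'M[C]_m).
Hypotheses (Q2_skew : adjmx Q2 = - Q2) (Q3_skew : adjmx Q3 = - Q3).
Hypotheses (Q2_sqr : Q2 *m Q2 = - 1%:M) (Q3_sqr : Q3 *m Q3 = - 1%:M).
Hypothesis Q23_anticomm : Q2 *m Q3 = - (Q3 *m Q2).

Lemma eigen_rows_orth k (B : 'M[C]_(k, m)) :
  B *m Q2 = 'i *: B -> B *m Q3 *m adjmx B = 0.
Proof.
move=> BQ2.
have Q2B : Q2 *m adjmx B = 'i *: adjmx B.
  by apply: oppr_inj; rewrite -mulNmx -Q2_skew -adjmxM BQ2 adjmxZ conjCi scaleNr.
(* With X := B Q3 B^*, B Q3 Q2 B^* is i X as Q2 B^* = i B^*, and -i X as Q3 Q2 = - Q2 Q3. *)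
have iX : 'i *: (B *m Q3 *m adjmx B) = - ('i *: (B *m Q3 *m adjmx B)).
  rewrite {1}scalemxAr -Q2B mulmxA -(mulmxA B Q3 Q2).
  rewrite -[Q3 *m Q2]opprK -Q23_anticomm.
  by rewrite mulmxN mulmxA BQ2 mulNmx -!scalemxAl.
have : ('i + 'i) *: (B *m Q3 *m adjmx B) = 0 by rewrite scalerDl {1}iX addNr.
by move/eqP; rewrite scaler_eq0 -mulr2n mulrn_eq0 (negbTE (neq0Ci C)) => /eqP.
Qed.

Lemma eigen_rows_Q2 k (B : 'M[C]_(k, m)) : B *m Q2 = 'i *: B ->
  col_mx B (- (B *m Q3)) *m Q2 =
  block_mx 'i%:M 0 0 (- 'i)%:M *m col_mx B (- (B *m Q3)).
Proof.
move=> BQ2; rewrite mul_col_mx mul_block_col !mul0mx addr0 add0r !mul_scalar_mx.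
congr col_mx; first exact: BQ2.
rewrite mulNmx -mulmxA -[Q3 *m Q2]opprK -Q23_anticomm mulmxN opprK mulmxA BQ2.
by rewrite -scalemxAl scaleNr scalerN opprK.
Qed.

Lemma eigen_rows_Q3 k (B : 'M[C]_(k, m)) :
  col_mx B (- (B *m Q3)) *m Q3 =
  block_mx 0 (-1)%:M 1%:M 0 *m col_mx B (- (B *m Q3)).
Proof.
rewrite mul_col_mx mul_block_col !mul0mx addr0 add0r !mul_scalar_mx.
by rewrite scaleN1r scale1r opprK mulNmx -mulmxA Q3_sqr mulmxN mulmx1 opprK.
Qed.

Lemma eigen_rows_unitary k (B : 'M[C]_(k, m)) :
  B *m adjmx B = 1%:M -> B *m Q2 = 'i *: B ->
  col_mx B (- (B *m Q3)) *m adjmx (col_mx B (- (B *m Q3))) = 1%:M.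
Proof.
move=> BB /eigen_rows_orth BQ3B.
rewrite adjmx_col_mx mul_col_row adjmxN adjmxM Q3_skew (scalar_mx_block k k 1).
congr block_mx => //.
- by rewrite mulNmx opprK mulmxA BQ3B.
- by rewrite mulNmx BQ3B oppr0.
- by rewrite !mulNmx opprK -!mulmxA (mulmxA Q3) Q3_sqr mulNmx mul1mx mulmxN opprK.
Qed.

Lemma eigenspace_rank_ge :
  (m <= \rank (kermx (Q2 - 'i%:M)) + \rank (kermx (Q2 - 'i%:M)))%N.
Proof.
set S := kermx (Q2 - 'i%:M).
have Q2_sqr1 : (Q2 + 'i%:M) *m (Q2 - 'i%:M) = 0.
  rewrite mulmxDl !mulmxBr Q2_sqr mul_mx_scalar mul_scalar_mx -scalar_mxM.
  by rewrite -expr2 sqrCi addrA subrK raddfN subrr.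
have Q3_conj : Q3 *m (Q2 + 'i%:M) *m Q3 = Q2 - 'i%:M.
  rewrite mulmxDr mul_mx_scalar mulmxDl -scalemxAl Q3_sqr -mulmxA Q23_anticomm.
  by rewrite mulmxN mulmxA Q3_sqr mulNmx mul1mx opprK scalerN scalemx1.
have S_lo : ((Q2 + 'i%:M)%R <= S)%MS by rewrite sub_kermx Q2_sqr1.
have S_hi : ((Q2 - 'i%:M)%R <= S *m Q3)%MS.
  by rewrite -Q3_conj submxMr // (submx_trans (submxMl _ _) S_lo).
(* Hence the rows of the invertible (Q2 + i) - (Q2 - i) = 2 i lie in S + S Q3. *)
have : (('i + 'i) *: 1%:M <= S + S *m Q3)%MS.
  have -> : ('i + 'i) *: 1%:M = (Q2 + 'i%:M) - (Q2 - 'i%:M) :> 'M_m.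
    by rewrite scalemx1 [Q2 + _]addrC addrKA opprK raddfD.
  by apply: addmx_sub_adds; rewrite ?eqmx_opp.
rewrite eqmx_scale; last by rewrite -mulr2n mulrn_eq0 negb_or neq0Ci.
move/mxrankS; rewrite mxrank1 => /leq_trans; apply.
apply: leq_trans (mxrank_adds_leqif S (S *m Q3)).1 _.
by rewrite leq_add2l mxrankM_maxl.
Qed.

Lemma eigen_orthonormal_basis : exists k (B : 'M[C]_(k, m)),
  [/\ (k + k)%N = m, B *m adjmx B = 1%:M & B *m Q2 = 'i *: B].
Proof.
set S := kermx (Q2 - 'i%:M); set B := schmidt (row_base S).
have BB : B *m adjmx B = 1%:M.
  by apply/eqP; rewrite -unitarymxE schmidt_unitarymx ?rank_leq_col.
have BS : (B :=: S)%MS.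
  exact: eqmx_trans (eqmx_schmidt_free (row_base_free S)) (eq_row_base S).
have BQ2 : B *m Q2 = 'i *: B.
  by apply/eqP; rewrite -subr_eq0 -mul_mx_scalar -mulmxBr -sub_kermx BS.
exists (\rank S), B; split=> //.
apply/eqP; rewrite eqn_leq eigenspace_rank_ge andbT.
have /eqP := eigen_rows_unitary BB BQ2; rewrite -unitarymxE => /mxrank_unitary <-.
exact: rank_leq_col.
Qed.

End SkewAnticommutingPair.

Lemma skew_anticomm_normal_form m (Q2 Q3 : 'M[C]_m) :
  adjmx Q2 = - Q2 -> adjmx Q3 = - Q3 ->
  Q2 *m Q2 = - 1%:M -> Q3 *m Q3 = - 1%:M -> Q2 *m Q3 = - (Q3 *m Q2) ->
  exists n (e : (2 * n)%N = m) (W : 'M[C]_m), [/\ unitary W,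
    adjmx W *m castmx (e, e) ((sigma1 *m sigma2) *t (1%:M : 'M[C]_n)) *m W = Q2 &
    adjmx W *m castmx (e, e) ((sigma1 *m sigma3) *t (1%:M : 'M[C]_n)) *m W = Q3].
Proof.
move=> Q2_skew Q3_skew Q2_sqr Q3_sqr Q23_anticomm.
have [n [B [m_def BB BQ2]]] :=
  eigen_orthonormal_basis Q2_skew Q3_skew Q2_sqr Q3_sqr Q23_anticomm.
subst m.
have e : (2 * n)%N = (n + n)%N by rewrite mul2n addnn.
pose W := col_mx B (- (B *m Q3)).
have W_unitary : unitary W.
  exact/mulmx1C/(eigen_rows_unitary Q2_skew Q3_skew Q3_sqr Q23_anticomm BB BQ2).
exists n, e, W; split=> //; rewrite ?sigma12_tens_block ?sigma13_tens_block.
- by rewrite -mulmxA -(eigen_rows_Q2 Q23_anticomm BQ2) mulmxA W_unitary mul1mx.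
- by rewrite -mulmxA -(eigen_rows_Q3 Q3_sqr) mulmxA W_unitary mul1mx.
Qed.

Lemma anticomm_unitaries_tens m (P1 P2 P3 : 'M[C]_m) :
  unitary P1 -> unitary P2 -> unitary P3 ->
  adjmx P1 *m P2 + adjmx P2 *m P1 = 0 -> adjmx P1 *m P3 + adjmx P3 *m P1 = 0 ->
  adjmx P2 *m P3 + adjmx P3 *m P2 = 0 ->
  exists (U V : 'M[C]_m) (n : nat) (e : (2 * n)%N = m), [/\ unitary U, unitary V,
    U *m castmx (e, e) (sigma1 *t (1%:M : 'M[C]_n)) *m V = P1,
    U *m castmx (e, e) (sigma2 *t (1%:M : 'M[C]_n)) *m V = P2 &
    U *m castmx (e, e) (sigma3 *t (1%:M : 'M[C]_n)) *m V = P3].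
Proof.
move=> P1_unitary P2_unitary P3_unitary a12 a13 a23.
have [n [e [W [W_unitary W2 W3]]]] := skew_anticomm_normal_form
  (anticomm_skew a12) (anticomm_skew a13) (anticomm_sqr P1_unitary P2_unitary a12)
  (anticomm_sqr P1_unitary P3_unitary a13) (anticomm_anticomm P1_unitary a12 a13 a23).
subst m; rewrite !castmx_id in W2 W3.
have sigma1_unitary := (iherm0_involution herm0_sigma1 sigma1_sqr).2.
have UE X :
    P1 *m adjmx W *m (sigma1 *t 1%:M) *m castmx (erefl, erefl) (X *t 1%:M) *m W =
    P1 *m (adjmx W *m ((sigma1 *m X) *t (1%:M : 'M[C]_n)) *m W).
  by rewrite castmx_id -(mulmxA _ (sigma1 *t 1%:M)) tensmx_mul mulmx1 -!mulmxA.
exists (P1 *m adjmx W *m (sigma1 *t 1%:M)), W, n, erefl; split=> //; rewrite ?UE.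
- apply: unitaryM (unitary_tensmx1 _ sigma1_unitary).
  exact: unitaryM P1_unitary (unitary_adjmx W_unitary).
- by rewrite sigma1_sqr tensmx11 mulmx1 W_unitary mulmx1.
- by rewrite W2 mulmxA mulmx_adj_unitary // mul1mx.
- by rewrite W3 mulmxA mulmx_adj_unitary // mul1mx.
Qed.

Theorem proposition3p4 (m : nat) (phi : 'M[C]_2 -> 'M[C]_m) :
  (real_linear_on_herm0 phi /\ (forall A, iherm0 A -> unitary (phi A)))
  <->
  (exists (U V : 'M[C]_m) (n : nat) (e : (2 * n)%N = m),
      unitary U /\ unitary V /\
      forall A : 'M[C]_2, herm0 A ->
        phi A = U *m castmx (e, e) (A *t (1%:M : 'M[C]_n)) *m V).
Proof.
split=> [[phi_lin phi_unitary] | [U [V [n [e [U_unitary [V_unitary phiE]]]]]]].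
  have phi_sigma X : herm0 X -> X *m X = 1%:M -> unitary (phi X).
    by move=> hX XX; apply/phi_unitary/iherm0_involution.
  have anti := real_linear_unitary_anticomm phi_lin phi_unitary.
  have [U [V [n [e [U_unitary V_unitary E1 E2 E3]]]]] := anticomm_unitaries_tens
    (phi_sigma _ herm0_sigma1 sigma1_sqr) (phi_sigma _ herm0_sigma2 sigma2_sqr)
    (phi_sigma _ herm0_sigma3 sigma3_sqr)
    (anti _ _ herm0_sigma1 herm0_sigma2 sigma1_sqr sigma2_sqr sigma12_anticomm)
    (anti _ _ herm0_sigma1 herm0_sigma3 sigma1_sqr sigma3_sqr sigma13_anticomm)
    (anti _ _ herm0_sigma2 herm0_sigma3 sigma2_sqr sigma3_sqr sigma23_anticomm).
  exists U, V, n, e; do 2!split=> //.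
  exact: real_linear_herm0_eq phi_lin (real_linear_tensmx1 e U V)
    (esym E1) (esym E2) (esym E3).
subst m; split=> [a b A B ra rb hA hB | A [hA A_unitary]].
  rewrite !phiE //; last exact: herm0_comb.
  exact: real_linear_tensmx1 (erefl _) U V a b A B ra rb hA hB.
rewrite phiE // castmx_id.
exact: unitaryM (unitaryM U_unitary (unitary_tensmx1 _ A_unitary)) V_unitary.
Qed.
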